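(* Let $H$ be a complex Hilbert space, $\varphi,\psi:[0,1]\to\mathbb{R}$ continuous, and $A\in\mathbb{B}(H)$. Then $$\Big(\int_0^1\min\{|\varphi(t)+\psi(t)|,|\varphi(t)-\psi(t)|\}\,dt\Big)\omega(A)\le\int_0^1\omega_t(\varphi,\psi;A)\,dt\le\Big(\int_0^1\max\{|\varphi(t)+\psi(t)|,|\varphi(t)-\psi(t)|\}\,dt\Big)\omega(A).$$
   Context: $S_1(H)$ is the unit sphere of $H$, $\omega(T)=\sup_{x\in S_1(H)}|\langle Tx,x\rangle|$, and $\omega_t(\varphi,\psi;A)=\sup_{x\in S_1(H)}|\langle(\varphi(t)A+\psi(t)A^* )x,x\rangle|$. *)

From HB Require Import structures.
From mathcomp Require Import all_boot all_order all_algebra.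
From mathcomp Require Import all_classical all_reals all_analysis.
From mathcomp Require Import complex.
Set Implicit Arguments. Unset Strict Implicit. Unset Printing Implicit Defensive.
Import Order.TTheory GRing.Theory Num.Theory.
Local Open Scope ring_scope.
Local Open Scope classical_set_scope.

Section Hilbert.
Variables (R : realType) (V : lmodType R[i]) (ip : V -> V -> R[i]).

Definition cabs (z : R[i]) : R := complex.Re `|z|.

Definition hnorm (x : V) : R := Num.sqrt (complex.Re (ip x x)).

Definition is_inner_product : Prop :=
  [/\ (forall (a : R[i]) (x y z : V), ip (a *: x + y) z = a * ip x z + ip y z),
      (forall x y : V, ip y x = (ip x y)^*),
      (forall x : V, 0 <= ip x x) &
      (forall x : V, ip x x = 0 -> x = 0)].

Definition is_complete : Prop :=
  forall u : nat -> V,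
    (forall e : R, 0 < e -> exists N : nat, forall m n : nat,
        (N <= m)%N -> (N <= n)%N -> hnorm (u m - u n) < e) ->
    exists l : V, forall e : R, 0 < e -> exists N : nat, forall n : nat,
        (N <= n)%N -> hnorm (u n - l) < e.

Definition is_hilbert : Prop := is_inner_product /\ is_complete.

Definition is_bounded_op (A : V -> V) : Prop :=
  linear A /\ exists M : R, forall x : V, hnorm (A x) <= M * hnorm x.

Definition is_adjoint (A As : V -> V) : Prop :=
  forall x y : V, ip (A x) y = ip x (As y).

Definition unit_sphere : set V := [set x | hnorm x = 1].

Definition numrad (T : V -> V) : R :=
  sup [set cabs (ip (T x) x) | x in unit_sphere].

Definition omega_t (phi psi : R -> R) (A As : V -> V) (t : R) : R :=
  numrad (fun x => (phi t)%:C%C *: A x + (psi t)%:C%C *: As x).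

End Hilbert.

Definition continuous_on01 (R : realType) (f : R -> R) : Prop :=
  forall x : R, 0 <= x <= 1 -> forall e : R, 0 < e ->
    exists2 d : R, 0 < d & forall y : R, 0 <= y <= 1 ->
      `|x - y| < d -> `|f x - f y| < e.

(* For real a, b and z = <A x, x>, the adjoint gives <(aA + bA^* ) x, x> = a z + b z^*,
   whose real and imaginary parts are (a + b) Re z and (a - b) Im z.  Hence its
   modulus lies between min(|a + b|, |a - b|) |z| and max(|a + b|, |a - b|) |z|,
   and taking suprema over the unit sphere bounds omega(aA + bA^* ) between
   min(|a + b|, |a - b|) omega(A) and max(|a + b|, |a - b|) omega(A).  With
   a = phi(t), b = psi(t) this holds for every t, and it integrates over [0, 1]:
   all integrands are continuous because min/max(|a + b|, |a - b|) and
   (a, b) |-> omega(aA + bA^* ) are Lipschitz in (a, b), the latter with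
   constant omega(A) by the triangle inequality. *)

From HB Require Import structures.
From mathcomp Require Import all_boot all_order all_algebra.
From mathcomp Require Import all_classical all_reals all_analysis.
From mathcomp Require Import complex.
From mathcomp Require Import ring lra.
Set Implicit Arguments. Unset Strict Implicit. Unset Printing Implicit Defensive.
Import Order.TTheory GRing.Theory Num.Theory.
Import numFieldNormedType.Exports.
Local Open Scope ring_scope.
Local Open Scope classical_set_scope.

Section Lipschitz2.
Variable R : realType.
Implicit Types a b p q : R.

Definition lipschitz2 (G : R -> R -> R) (L : R) : Prop :=
  forall a b a' b', `|G a b - G a' b'| <= L * (`|a - a'| + `|b - b'|).

Lemma dist_min_max_le p q p' q' e : `|p - p'| <= e -> `|q - q'| <= e ->
  `|Num.min p q - Num.min p' q'| <= e /\ `|Num.max p q - Num.max p' q'| <= e.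
Proof.
rewrite !ler_norml => /andP[? ?] /andP[? ?].
by split; case: (ltP p q); case: (ltP p' q') => *; apply/andP; split; lra.
Qed.

Lemma dist_abs_addsub_le a b a' b' :
  `| `|a + b| - `|a' + b'| | <= `|a - a'| + `|b - b'| /\
  `| `|a - b| - `|a' - b'| | <= `|a - a'| + `|b - b'|.
Proof.
split; apply: le_trans (ler_dist_dist _ _) _.
  have -> : a + b - (a' + b') = (a - a') + (b - b') by ring.
  exact: ler_normD.
have -> : a - b - (a' - b') = (a - a') - (b - b') by ring.
exact: ler_normB.
Qed.

Lemma lipschitz2_scale (G : R -> R -> R) (L c : R) : 0 <= c ->
  lipschitz2 G L -> lipschitz2 (fun a b => G a b * c) (c * L).
Proof.
move=> c0 G_lip a b a' b'.
by rewrite -mulrBl normrM (ger0_norm c0) mulrC -mulrA ler_wpM2l.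
Qed.

Lemma lipschitz2_min_abs_addsub :
  lipschitz2 (fun a b => Num.min `|a + b| `|a - b|) 1.
Proof.
move=> a b a' b'; rewrite mul1r.
have [add_lip sub_lip] := dist_abs_addsub_le a b a' b'.
exact: (dist_min_max_le add_lip sub_lip).1.
Qed.

Lemma lipschitz2_max_abs_addsub :
  lipschitz2 (fun a b => Num.max `|a + b| `|a - b|) 1.
Proof.
move=> a b a' b'; rewrite mul1r.
have [add_lip sub_lip] := dist_abs_addsub_le a b a' b'.
exact: (dist_min_max_le add_lip sub_lip).2.
Qed.

End Lipschitz2.

Section ComplexModulus.
Variable R : realType.
Implicit Types (a b c : R) (w z : R[i]).

Lemma normc_cabs w : `|w| = (cabs w)%:C%C.
Proof. by rewrite /cabs normc_def. Qed.

Lemma cabs_ge0 w : 0 <= cabs w.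
Proof. by rewrite /cabs normc_def sqrtr_ge0. Qed.

Lemma cabs_sqr w : cabs w ^+ 2 = complex.Re w ^+ 2 + complex.Im w ^+ 2.
Proof. by rewrite /cabs normc_def /= sqr_sqrtr // addr_ge0 ?sqr_ge0. Qed.

Lemma cabsD w w' : cabs (w + w') <= cabs w + cabs w'.
Proof. by rewrite -lecR rmorphD /= -!normc_cabs ler_normD. Qed.

Lemma cabsJ w : cabs w^*%C = cabs w.
Proof. by rewrite /cabs normcJ. Qed.

Lemma cabs_realM c w : cabs (c%:C%C * w) = `|c| * cabs w.
Proof.
rewrite /cabs normrM normc_def /= expr0n addr0 sqrtr_sqr.
by rewrite mulr0 subr0.
Qed.

Lemma cabs_combJ_sqr a b z :
  cabs (a%:C%C * z + b%:C%C * z^*%C) ^+ 2 =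
  (a + b) ^+ 2 * complex.Re z ^+ 2 + (a - b) ^+ 2 * complex.Im z ^+ 2.
Proof. by rewrite cabs_sqr; case: z => u v /=; ring. Qed.

Lemma cabs_combJ_ge a b z :
  Num.min `|a + b| `|a - b| * cabs z <= cabs (a%:C%C * z + b%:C%C * z^*%C).
Proof.
set m := Num.min _ _.
have m0 : 0 <= m by rewrite le_min !normr_ge0.
have sqr_m p : m <= `|p| -> m ^+ 2 <= p ^+ 2.
  by move=> mp; rewrite -real_normK ?num_real // lerXn2r ?nnegrE ?normr_ge0.
rewrite -ler_sqr ?nnegrE ?mulr_ge0 ?cabs_ge0 // cabs_combJ_sqr exprMn cabs_sqr.
by rewrite mulrDr lerD // ler_wpM2r ?sqr_ge0 // sqr_m // ge_min lexx ?orbT.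
Qed.

Lemma cabs_combJ_le a b z :
  cabs (a%:C%C * z + b%:C%C * z^*%C) <= Num.max `|a + b| `|a - b| * cabs z.
Proof.
set M := Num.max _ _.
have M0 : 0 <= M by rewrite le_max normr_ge0.
have sqr_M p : `|p| <= M -> p ^+ 2 <= M ^+ 2.
  by move=> pM; rewrite -real_normK ?num_real // lerXn2r ?nnegrE ?normr_ge0.
rewrite -ler_sqr ?nnegrE ?mulr_ge0 ?cabs_ge0 // cabs_combJ_sqr exprMn cabs_sqr.
by rewrite mulrDr lerD // ler_wpM2r ?sqr_ge0 // sqr_M // le_max lexx ?orbT.
Qed.

Lemma cabs_combJ_lipschitz a b a' b' z :
  cabs (a%:C%C * z + b%:C%C * z^*%C) <=
  cabs (a'%:C%C * z + b'%:C%C * z^*%C) + (`|a - a'| + `|b - b'|) * cabs z.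
Proof.
have -> : a%:C%C * z + b%:C%C * z^*%C =
    (a'%:C%C * z + b'%:C%C * z^*%C) + ((a - a')%:C%C * z + (b - b')%:C%C * z^*%C).
  by rewrite !rmorphB /=; ring.
apply: le_trans (cabsD _ _) _; rewrite lerD //.
by apply: le_trans (cabsD _ _) _; rewrite !cabs_realM cabsJ mulrDl.
Qed.

End ComplexModulus.

Section InnerProduct.
Variables (R : realType) (V : lmodType R[i]) (ip : V -> V -> R[i]).
Hypothesis ip_inner : is_inner_product ip.

Lemma ipDZl a x y z : ip (a *: x + y) z = a * ip x z + ip y z.
Proof. by case: ip_inner. Qed.

Lemma ipC x y : ip y x = (ip x y)^*%C.
Proof. by case: ip_inner. Qed.

Lemma ip_ge0 x : 0 <= ip x x.
Proof. by case: ip_inner. Qed.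

Lemma ip0l z : ip 0 z = 0.
Proof. by have := ipDZl (-1) 0 0 z; rewrite scaler0 addr0 mulN1r addNr. Qed.

Lemma ipZl a x z : ip (a *: x) z = a * ip x z.
Proof. by rewrite -[a *: x]addr0 ipDZl ip0l addr0. Qed.

Lemma ipDl x y z : ip (x + y) z = ip x z + ip y z.
Proof. by have := ipDZl 1 x y z; rewrite scale1r mul1r. Qed.

Lemma ipZr a x z : ip z (a *: x) = a^*%C * ip z x.
Proof. by rewrite ipC ipZl rmorphM /= -ipC. Qed.

Lemma ipDr x y z : ip z (x + y) = ip z x + ip z y.
Proof. by rewrite ipC ipDl rmorphD /= -!ipC. Qed.

Lemma ip_hnorm x : ip x x = (hnorm ip x ^+ 2)%:C%C.
Proof.
have x0 := ip_ge0 x.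
have Re0 : 0 <= complex.Re (ip x x) by move: x0; rewrite lecE => /andP[].
rewrite /hnorm sqr_sqrtr //.
by apply/eqP; rewrite eq_complex /= (ger0_Im x0) !eqxx.
Qed.

Lemma unit_sphere_ip x : unit_sphere ip x -> ip x x = 1.
Proof. by rewrite ip_hnorm => ->; rewrite expr1n. Qed.

Lemma cabs_ip_le_hnorm x y : unit_sphere ip x -> cabs (ip y x) <= hnorm ip y.
Proof.
move=> /unit_sphere_ip x1; set l := ip y x.
have : 0 <= ip (y + (- l) *: x) (y + (- l) *: x) by exact: ip_ge0.
have -> : ip (y + (- l) *: x) (y + (- l) *: x) = ip y y - l * l^*%C.
  by rewrite ipDl !ipDr !ipZl !ipZr x1 -/l (ipC y x) -/l rmorphN /=; ring.
rewrite subr_ge0 -normCK ip_hnorm normc_cabs -rmorphXn lecR.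
by rewrite ler_sqr ?nnegrE ?cabs_ge0 ?sqrtr_ge0.
Qed.

End InnerProduct.

Section NumericalRadius.
Variables (R : realType) (V : lmodType R[i]) (ip : V -> V -> R[i]).

Definition numrange_abs (T : V -> V) : set R :=
  [set cabs (ip (T x) x) | x in unit_sphere ip].

Lemma numrad_empty_sphere (T : V -> V) :
  ~ (exists x, unit_sphere ip x) -> numrad ip T = 0.
Proof.
move=> no_unit; rewrite /numrad (_ : [set _ | _ in _] = set0) ?sup0 //.
by apply/seteqP; split => // y [x ux _]; apply: no_unit; exists x.
Qed.

Lemma numrad_le (T : V -> V) (K : R) : 0 <= K ->
  (forall x, unit_sphere ip x -> cabs (ip (T x) x) <= K) -> numrad ip T <= K.
Proof.
move=> K0 TK; have [[x0 ux0]|no_unit] := pselect (exists x, unit_sphere ip x).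
  by apply: ge_sup => [|_ [x ux <-]]; [exists (cabs (ip (T x0) x0)), x0 | exact: TK].
by rewrite numrad_empty_sphere.
Qed.

Lemma le_numrad {T : V -> V} {x : V} : has_ubound (numrange_abs T) ->
  unit_sphere ip x -> cabs (ip (T x) x) <= numrad ip T.
Proof. by move=> ubT ux; apply: ub_le_sup => //; exists x. Qed.

Lemma numrad_ge0 (T : V -> V) : has_ubound (numrange_abs T) -> 0 <= numrad ip T.
Proof.
move=> ubT; have [[x ux]|no_unit] := pselect (exists x, unit_sphere ip x).
  exact: le_trans (cabs_ge0 _) (le_numrad ubT ux).
by rewrite numrad_empty_sphere.
Qed.

End NumericalRadius.

Section AdjointCombination.
Variables (R : realType) (V : lmodType R[i]) (ip : V -> V -> R[i]).
Variables (A As : V -> V).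
Hypothesis ip_inner : is_inner_product ip.
Hypothesis A_bounded : is_bounded_op ip A.
Hypothesis A_adjoint : is_adjoint ip A As.

Definition adj_comb (a b : R) (x : V) : V := a%:C%C *: A x + b%:C%C *: As x.

Lemma ip_adj_comb a b x :
  ip (adj_comb a b x) x = a%:C%C * ip (A x) x + b%:C%C * (ip (A x) x)^*%C.
Proof.
by rewrite /adj_comb (ipDZl ip_inner) (ipZl ip_inner) (ipC ip_inner x (As x)) -A_adjoint.
Qed.

Lemma numrange_abs_bounded : has_ubound (numrange_abs ip A).
Proof.
case: A_bounded => _ [M AM]; exists M => _ [x ux <-].
apply: le_trans (cabs_ip_le_hnorm ip_inner _ ux) _.
by have := AM x; rewrite (ux : hnorm ip x = 1) mulr1.
Qed.

Lemma numradA_ge0 : 0 <= numrad ip A.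
Proof. exact: numrad_ge0 numrange_abs_bounded. Qed.

Lemma cabs_ip_adj_comb_le a b x : unit_sphere ip x ->
  cabs (ip (adj_comb a b x) x) <= Num.max `|a + b| `|a - b| * numrad ip A.
Proof.
move=> ux; rewrite ip_adj_comb; apply: le_trans (cabs_combJ_le _ _ _) _.
apply: ler_wpM2l; first by rewrite le_max normr_ge0.
exact: le_numrad numrange_abs_bounded ux.
Qed.

Lemma numrange_abs_adj_comb_bounded a b : has_ubound (numrange_abs ip (adj_comb a b)).
Proof. by eexists => _ [x ux <-]; exact: cabs_ip_adj_comb_le. Qed.

Lemma numrad_adj_comb_le a b :
  numrad ip (adj_comb a b) <= Num.max `|a + b| `|a - b| * numrad ip A.
Proof.
apply: numrad_le; last exact: cabs_ip_adj_comb_le.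
by rewrite mulr_ge0 ?numradA_ge0 ?le_max ?normr_ge0.
Qed.

Lemma numrad_adj_comb_ge a b :
  Num.min `|a + b| `|a - b| * numrad ip A <= numrad ip (adj_comb a b).
Proof.
set m := Num.min _ _; have m0 : 0 <= m by rewrite le_min !normr_ge0.
have ub_comb := numrange_abs_adj_comb_bounded a b.
have [->|m_neq0] := eqVneq m 0; first by rewrite mul0r numrad_ge0.
have m_gt0 : 0 < m by rewrite lt_def m_neq0.
rewrite mulrC -ler_pdivlMr //; apply: numrad_le => [|x ux].
  by rewrite divr_ge0 ?numrad_ge0 ?ltW.
rewrite ler_pdivlMr // mulrC; apply: le_trans (le_numrad ub_comb ux).
by rewrite ip_adj_comb; exact: cabs_combJ_ge.
Qed.

Lemma numrad_adj_comb_lipschitz :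
  lipschitz2 (fun a b => numrad ip (adj_comb a b)) (numrad ip A).
Proof.
move=> a b a' b'.
suff one_side c d c' d' : numrad ip (adj_comb c d) <=
    numrad ip (adj_comb c' d') + numrad ip A * (`|c - c'| + `|d - d'|).
  have := one_side a b a' b'; have := one_side a' b' a b.
  by rewrite (distrC a') (distrC b') ler_norml => *; apply/andP; split; lra.
apply: numrad_le => [|x ux].
  apply: addr_ge0; first exact: numrad_ge0 (numrange_abs_adj_comb_bounded _ _).
  by rewrite mulr_ge0 ?numradA_ge0 ?addr_ge0.
rewrite !ip_adj_comb; apply: le_trans (cabs_combJ_lipschitz _ _ c' d' _) _.
rewrite -ip_adj_comb mulrC; apply: lerD.
  exact: le_numrad (numrange_abs_adj_comb_bounded _ _) ux.
by apply: ler_wpM2r; [rewrite addr_ge0 | exact: le_numrad numrange_abs_bounded ux].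
Qed.

End AdjointCombination.

Section ContinuousOn01.
Variable R : realType.

Lemma continuous_on01_within (f : R -> R) :
  continuous_on01 f -> {within `[0, 1], continuous f}.
Proof.
move=> cf; apply/subspace_continuousP => x /=; rewrite in_itv => x01.
apply/cvgrPdist_lt => e e0; have [d d0 fd] := cf x x01 e e0.
apply/nbhs_ballP; exists d => //= y xy; rewrite in_itv => y01.
exact: fd.
Qed.

Lemma continuous_on01_integrable (f : R -> R) : continuous_on01 f ->
  (@lebesgue_measure R).-integrable `[0, 1] (EFin \o f).
Proof.
move=> cf; apply: continuous_compact_integrable; first exact: segment_compact.
exact: continuous_on01_within.
Qed.

Lemma continuous_on01_lipschitz2_comp (G : R -> R -> R) (L : R) (phi psi : R -> R) :
  0 <= L -> lipschitz2 G L -> continuous_on01 phi -> continuous_on01 psi ->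
  continuous_on01 (fun t => G (phi t) (psi t)).
Proof.
move=> L0 G_lip cphi cpsi x x01 e e0.
(* [L + 1] rather than [L], which may vanish. *)
have L1 : 0 < L + 1 by lra.
set e' := e / (2 * (L + 1)).
have e'0 : 0 < e' by rewrite divr_gt0 // mulr_gt0.
have [d1 d1_gt0 phi_d1] := cphi x x01 e' e'0.
have [d2 d2_gt0 psi_d2] := cpsi x x01 e' e'0.
exists (Num.min d1 d2) => [|y y01]; first by rewrite lt_min d1_gt0 d2_gt0.
rewrite lt_min => /andP[/(phi_d1 y y01) phi_xy /(psi_d2 y y01) psi_xy].
apply: le_lt_trans (G_lip _ _ _ _) _.
apply: (@le_lt_trans _ _ ((L + 1) * (`|phi x - phi y| + `|psi x - psi y|))).
  by apply: ler_wpM2r; [rewrite addr_ge0 | lra].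
have -> : e = (L + 1) * (e' + e') by rewrite /e'; field; rewrite gt_eqF.
by rewrite ltr_pM2l // ltrD.
Qed.

End ContinuousOn01.

Theorem corollary4p4 (R : realType) (V : lmodType R[i]) (ip : V -> V -> R[i])
  (phi psi : R -> R) (A As : V -> V) :
  is_hilbert ip ->
  continuous_on01 phi ->
  continuous_on01 psi ->
  is_bounded_op ip A ->
  is_adjoint ip A As ->
  (Rintegral lebesgue_measure `[0%R, 1%R]
     (fun t => Num.min `|phi t + psi t| `|phi t - psi t|)) * numrad ip A
  <= Rintegral lebesgue_measure `[0%R, 1%R] (omega_t ip phi psi A As)
  /\
  Rintegral lebesgue_measure `[0%R, 1%R] (omega_t ip phi psi A As)
  <= (Rintegral lebesgue_measure `[0%R, 1%R]
     (fun t => Num.max `|phi t + psi t| `|phi t - psi t|)) * numrad ip A.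
Proof.
move=> [ip_inner _] cphi cpsi A_bounded A_adjoint.
have radA_ge0 := numradA_ge0 ip_inner A_bounded.
have integrable_comp G L : 0 <= L -> lipschitz2 G L ->
    (@lebesgue_measure R).-integrable `[0, 1] (EFin \o (fun t => G (phi t) (psi t))).
  move=> L0 G_lip; apply: continuous_on01_integrable.
  exact: continuous_on01_lipschitz2_comp G_lip cphi cpsi.
have int_omega := integrable_comp _ _ radA_ge0
  (numrad_adj_comb_lipschitz ip_inner A_bounded A_adjoint).
have int_min := integrable_comp _ _ ler01 (@lipschitz2_min_abs_addsub R).
have int_minA := integrable_comp _ _ (mulr_ge0 radA_ge0 ler01)
  (lipschitz2_scale radA_ge0 (@lipschitz2_min_abs_addsub R)).
have int_max := integrable_comp _ _ ler01 (@lipschitz2_max_abs_addsub R).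
have int_maxA := integrable_comp _ _ (mulr_ge0 radA_ge0 ler01)
  (lipschitz2_scale radA_ge0 (@lipschitz2_max_abs_addsub R)).
split; rewrite -RintegralZr //; apply: le_Rintegral => // t _.
  exact: numrad_adj_comb_ge.
exact: numrad_adj_comb_le.
Qed.
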